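(* Let $m,n$ be positive integers. The $m\times n$ matrices $B_{1,1},\dots,B_{m,n-1}$ (that is, $B_{i,j}$ for $i\in[m]$, $j\in[n-1]$) together with $C_n$ are linearly independent.
   Context: For $i\in[m]$ and $j\in[n-1]$, $B_{i,j}$ is the $m\times n$ $(0,1)$-matrix whose $(i,j)$ entry is $1$, whose $(j+1)$-th column has all entries equal to $1$ except the $(i,j+1)$ entry which is $0$, and all of whose other entries are $0$. $C_n$ is the $m\times n$ $(0,1)$-matrix whose $n$-th column is all $1$'s and all other entries $0$. *)

From mathcomp Require Import all_boot all_order all_algebra.
Set Implicit Arguments. Unset Strict Implicit. Unset Printing Implicit Defensive.
Import GRing.Theory Num.Theory.
Local Open Scope ring_scope.

(* Indices are 0-based: row i : 'I_m stands for i+1 in [m], and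
   j : 'I_(n.-1) stands for j+1 in [n-1]; column j+1 (1-based) is 0-based j,
   column j+2 (1-based) is 0-based j+1. *)

Definition Bmat (R : nzRingType) (m n : nat) (i : 'I_m) (j : 'I_(n.-1))
  : 'M[R]_(m, n) :=
  \matrix_(r < m, c < n)
    if (c == j :> nat) then (if r == i then 1 else 0)
    else if (c == j.+1 :> nat) then (if r == i then 0 else 1)
    else 0.

Definition Cmat (R : nzRingType) (m n : nat) : 'M[R]_(m, n) :=
  \matrix_(r < m, c < n) if (c == n.-1 :> nat) then 1 else 0.

Definition BC_family (R : nzRingType) (m n : nat) : seq 'M[R]_(m, n) :=
  [seq Bmat R ij.1 ij.2 | ij <- enum {: 'I_m * 'I_(n.-1)}]
  ++ [:: Cmat R m n].

(* Order the family by column, with C_n last.  Every B_{i,j} has a 1 at (i,j)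
   where all members that are not earlier in this order vanish, and C_n has a 1
   at (1,n); such a triangular family is free, by induction along the order. *)

From mathcomp Require Import all_boot all_order all_algebra.
Set Implicit Arguments. Unset Strict Implicit. Unset Printing Implicit Defensive.
Import GRing.Theory Num.Theory.
Local Open Scope ring_scope.

Section FreeFamilies.

Variable K : fieldType.

Lemma free_map_enum (vT : vectType K) (I : finType) (f : I -> vT) :
  (forall a : I -> K, \sum_i a i *: f i = 0 -> forall i, a i = 0) ->
  free [seq f i | i <- enum I].
Proof.
move=> f_indep.
have -> : [seq f i | i <- enum I] = map_tuple f (enum_tuple I) by [].
apply/freeP => k k_sum0 i.
have nth_f (l : 'I_#|I|) : (map f (enum I))`_l = f (enum_val l).
  by rewrite (nth_map (enum_val l)) -?enum_val_nth // -cardE.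
suff /(_ (enum_val i)) : forall x, k (enum_rank x) = 0 by rewrite enum_valK.
apply: f_indep.
rewrite -[RHS]k_sum0 (reindex (fun l : 'I_#|I| => enum_val l)) /=.
  by apply: eq_bigr => l _; rewrite nth_f (enum_valK l).
by exists enum_rank => x _; rewrite ?enum_valK ?enum_rankK.
Qed.

Lemma free_pivot_mx m n (I : finType) (f : I -> 'M[K]_(m, n))
    (piv : I -> 'I_m * 'I_n) (rk : I -> nat) :
    (forall i, f i (piv i).1 (piv i).2 != 0) ->
    (forall i j, j != i -> (rk i <= rk j)%N -> f j (piv i).1 (piv i).2 = 0) ->
  free [seq f i | i <- enum I].
Proof.
move=> piv_neq0 piv_later0; apply: free_map_enum => a sum0.
have pivot_eq i : \sum_j a j * f j (piv i).1 (piv i).2 = 0.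
  have := congr1 (fun A : 'M_(m, n) => A (piv i).1 (piv i).2) sum0.
  rewrite summxE [RHS]mxE => entry0; rewrite -[RHS]entry0.
  by apply: eq_bigr => j _; rewrite mxE.
suff a0 k i : (rk i < k)%N -> a i = 0 by move=> i; apply: (a0 (rk i).+1).
elim: k i => // k IHk i rk_i; have := pivot_eq i.
rewrite (bigD1 i) //= big1 ?addr0 => [/eqP|j ji].
  by rewrite mulf_eq0 (negPf (piv_neq0 i)) orbF => /eqP.
have [rk_ij | rk_ji] := leqP (rk i) (rk j).
  by rewrite piv_later0 ?mulr0.
by rewrite IHk ?mul0r // (leq_trans rk_ji).
Qed.

End FreeFamilies.

Section BCFamily.

Variables (R : nzRingType) (m n : nat).

Definition BCmx (x : option ('I_m * 'I_n.-1)) : 'M[R]_(m, n) :=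
  if x is Some ij then Bmat R ij.1 ij.2 else Cmat R m n.

Lemma BC_family_perm :
  perm_eq (BC_family R m n) [seq BCmx x | x <- enum {: option _}].
Proof.
have -> : BC_family R m n =
    [seq BCmx x | x <- [seq Some ij | ij <- enum {: 'I_m * 'I_n.-1}] ++ [:: None]].
  by rewrite map_cat -map_comp.
apply/perm_map/uniq_perm => [||x]; rewrite ?enum_uniq //.
- rewrite cat_uniq map_inj_uniq ?enum_uniq /=; last by move=> ? ? [].
  by rewrite orbF andbT; apply/mapP => -[].
- case: x => [ij|]; rewrite mem_enum mem_cat;
    by rewrite ?(mem_map (@Some_inj _)) ?mem_enum ?inE ?orbT.
Qed.

Hypotheses (hm : (0 < m)%N) (hn : (0 < n)%N).

Definition BC_pivot (x : option ('I_m * 'I_n.-1)) : 'I_m * 'I_n :=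
  if x is Some ij then (ij.1, widen_ord (leq_pred n) ij.2)
  else (Ordinal hm, Ordinal (etrans (ltn_predL n) hn)).

Definition BC_rank (x : option ('I_m * 'I_n.-1)) : nat :=
  if x is Some ij then ij.2 else n.-1.

Lemma BC_pivot_neq0 x : BCmx x (BC_pivot x).1 (BC_pivot x).2 != 0.
Proof. by case: x => [[i j]|]; rewrite mxE /= !eqxx oner_neq0. Qed.

Lemma BC_pivot_later0 x y : y != x -> (BC_rank x <= BC_rank y)%N ->
  BCmx y (BC_pivot x).1 (BC_pivot x).2 = 0.
Proof.
case: x => [[r c]|]; case: y => [[i j]|] //= y_neq_x; rewrite ?mxE /=.
- move=> le_cj; rewrite (ltn_eqF (leq_ltn_trans le_cj (ltnSn j))).
  case: eqP => [/val_inj eq_cj|] //; case: eqP => [eq_ri|] //.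
  by case/eqP: y_neq_x; rewrite eq_ri eq_cj.
- by rewrite (ltn_eqF (ltn_ord c)).
- by rewrite leqNgt ltn_ord.
Qed.

End BCFamily.

Theorem mainTheorem7 (R : numFieldType) (m n : nat) (hm : (0 < m)%N) (hn : (0 < n)%N) :
  free (BC_family R m n).
Proof.
rewrite (perm_free (BC_family_perm R m n)).
apply: (free_pivot_mx (piv := BC_pivot hm hn) (rk := @BC_rank m n)).
  exact: BC_pivot_neq0.
exact: BC_pivot_later0.
Qed.
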